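(* Let $G$ be a finite totally rectangular digraph that contains a cycle of net length $d>0$. Then $G$ contains a directed cycle of length $d$.
   Context: In a digraph $G$, a path is a sequence of vertices $(u_1,\dots,u_k)$ together with edges $(e_1,\dots,e_{k-1})$ where each $e_i$ is either $(u_i,u_{i+1})\in E(G)$ (a forward edge) or $(u_{i+1},u_i)\in E(G)$ (a backward edge); vertices need not be distinct. Its length is $k-1$, its net length is the number of forward edges minus the number of backward edges, and it is directed if all edges are forward. A cycle is a sequence $(u_0,\dots,u_{k-1})$ with edges $(e_0,\dots,e_{k-1})$ such that $(u_0,\dots,u_{k-1},u_0)$ with these edges is a path; its length is $k$, its net length is the net length of this path, and it is directed if this path is directed. A digraph $G$ is $k$-rectangular if whenever $G$ contains directed paths of length $k$ from $x$ to $y$, from $x'$ to $y$, and from $x'$ to $y'$, then $G$ contains a directed path of length $k$ from $x$ to $y'$. $G$ is totally rectangular if it is $k$-rectangular for all $k\ge 1$. *)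

From mathcomp Require Import all_boot.
Set Warnings "-notation-overridden".
Set Implicit Arguments. Unset Strict Implicit. Unset Printing Implicit Defensive.

(* An oriented step: the next vertex and whether the edge is forward (true)
   or backward (false). *)
Definition ostep_ok {V : finType} (E : rel V) (u : V) (st : V * bool) : bool :=
  if st.2 then E u st.1 else E st.1 u.

Fixpoint opath {V : finType} (E : rel V) (x : V) (s : seq (V * bool)) : bool :=
  match s with
  | [::] => true
  | st :: s' => ostep_ok E x st && opath E st.1 s'
  end.

Definition n_forward {V : finType} (s : seq (V * bool)) : nat := count (fun st => st.2) s.
Definition n_backward {V : finType} (s : seq (V * bool)) : nat := count (fun st => ~~ st.2) s.

Definition last_vertex {V : finType} (x : V) (s : seq (V * bool)) : V :=
  last x (map fst s).

Definition is_cycle {V : finType} (E : rel V) (x : V) (s : seq (V * bool)) : Prop :=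
  0 < size s /\ opath E x s /\ last_vertex x s = x.

(* a cycle of (positive) net length d: forward - backward = d,
   i.e. forward = backward + d *)
Definition has_cycle_net_length {V : finType} (E : rel V) (d : nat) : Prop :=
  exists x s, is_cycle E x s /\ n_forward s = n_backward s + d.

Definition dpath_len {V : finType} (E : rel V) (k : nat) (x y : V) : Prop :=
  exists p : seq V, size p = k /\ path E x p /\ last x p = y.

Definition has_directed_cycle_len {V : finType} (E : rel V) (d : nat) : Prop :=
  exists x : V, dpath_len E d x x.

Definition k_rectangular {V : finType} (E : rel V) (k : nat) : Prop :=
  forall x y x' y' : V,
    dpath_len E k x y -> dpath_len E k x' y -> dpath_len E k x' y' ->
    dpath_len E k x y'.

Definition totally_rectangular {V : finType} (E : rel V) : Prop :=
  forall k, 1 <= k -> k_rectangular E k.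

From mathcomp Require Import all_boot zify.
Set Implicit Arguments. Unset Strict Implicit. Unset Printing Implicit Defensive.

(* Read the cycle as a closed zigzag of forward and backward directed paths
   (initially single edges) of net length d. Adjacent runs of the same
   orientation concatenate. Otherwise a shortest run, say backward of length
   k, sits between two forward runs of length >= k, and k-rectangularity
   replaces the three runs by one forward run that cuts k off each of them;
   dually for a forward shortest run. The zigzag thus shrinks to two directed
   paths x -> y of lengths d + k and k. Finally, if v -> w has length d and
   v -> q, w -> q both have length r, rectangularity applied to the first
   step out of v yields the same configuration with r - 1; at r = 0 the path
   v -> w is a directed cycle of length d. *)

Section DirectedPaths.
Variables (V : finType) (E : rel V).

Lemma dpath_len_cat m n x y z :
  dpath_len E m x y -> dpath_len E n y z -> dpath_len E (m + n) x z.
Proof.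
move=> [p [<- [Ep <-]]] [q [<- [Eq <-]]]; exists (p ++ q).
by rewrite size_cat cat_path Ep Eq last_cat.
Qed.

Lemma dpath_len_split m n x z :
  dpath_len E (m + n) x z -> exists2 y, dpath_len E m x y & dpath_len E n y z.
Proof.
move=> [p [size_p [Ep <-]]]; rewrite -(cat_take_drop m p) cat_path in Ep.
case/andP: Ep => Ep1 Ep2; exists (last x (take m p)).
  by exists (take m p); rewrite size_takel // size_p leq_addr.
by exists (drop m p); rewrite size_drop size_p addKn -last_cat cat_take_drop.
Qed.

Lemma dpath_len0 x y : dpath_len E 0 x y <-> x = y.
Proof.
split; first by case=> -[|? ?] [] //= _ [].
by move=> ->; exists [::].
Qed.

Lemma dpath_len1 x y : E x y -> dpath_len E 1 x y.
Proof. by exists [:: y]; rewrite /= andbT. Qed.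

Lemma dpath_len_rect k m n x y z w : k_rectangular E k -> k <= m -> k <= n ->
  dpath_len E m x y -> dpath_len E k z y -> dpath_len E n z w ->
  dpath_len E (m - k + n) x w.
Proof.
move=> rectk km kn; rewrite -{1}(subnK km) -{1}(subnKC kn).
move=> /dpath_len_split[x1 xx1 x1y] zy /dpath_len_split[z1 zz1 z1w].
rewrite -{1}(subnKC kn) addnA.
exact: dpath_len_cat (dpath_len_cat xx1 (rectk _ _ _ _ x1y zy zz1)) z1w.
Qed.

Definition has_dpaths_differing_by d :=
  exists x y k, dpath_len E (d + k) x y /\ dpath_len E k x y.

Hypothesis rectE : totally_rectangular E.
Variable d : nat.
Hypothesis d_gt0 : 0 < d.

Lemma directed_cycle_of_converging_dpaths r v w q :
  dpath_len E d v w -> dpath_len E r v q -> dpath_len E r w q ->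
  has_directed_cycle_len E d.
Proof.
elim: r v w q => [|r IH] v w q vw.
  by move=> /dpath_len0 <- /dpath_len0 wv; exists v; rewrite -{2}wv.
move=> vq wq; have [v1 vv1 v1w] : exists2 v1, dpath_len E 1 v v1 & dpath_len E d.-1 v1 w.
  by apply: dpath_len_split; rewrite add1n prednK.
have [q1 v1q1 q1q] : exists2 q1, dpath_len E r v1 q1 & dpath_len E d q1 q.
  apply: dpath_len_split; rewrite (_ : r + d = d.-1 + r.+1); last by lia.
  exact: dpath_len_cat v1w wq.
have vq1 : dpath_len E r.+1 v q1 by rewrite -add1n; exact: dpath_len_cat vv1 v1q1.
have wq1 : dpath_len E (1 + r) w q1 := rectE (ltn0Sn r) wq vq vq1.
have [w1 ww1 w1q1] := dpath_len_split wq1.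
apply: IH v1q1 w1q1; rewrite -(prednK d_gt0) -addn1; exact: dpath_len_cat v1w ww1.
Qed.

Lemma directed_cycle_of_dpaths_differing_by :
  has_dpaths_differing_by d -> has_directed_cycle_len E d.
Proof.
move=> [x [y [k [/dpath_len_split[z xz zy] xy]]]].
exact: directed_cycle_of_converging_dpaths xz xy zy.
Qed.

End DirectedPaths.

Lemma split_at_min (T : Type) (f : T -> nat) x s :
  exists s1 y s2, x :: s = s1 ++ y :: s2 /\ all (fun z => f y <= f z) (x :: s).
Proof.
elim: s x => [|x' s IH] x; first by exists [::], x, [::]; rewrite /= leqnn.
have [s1 [y [s2 [e min_y]]]] := IH x'; case: (leqP (f x) (f y)) => [xy | yx].
  exists [::], x, (x' :: s); split=> //=; rewrite leqnn.
  by apply: sub_all min_y => z; apply: leq_trans.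
by exists (x :: s1), y, s2; rewrite e /= ltnW //= -e.
Qed.

Record segment (V : Type) := Segment { seg_fwd : bool; seg_len : nat; seg_end : V }.

Section Zigzags.
Variables (V : finType) (E : rel V) (d : nat).
Implicit Types (u : V) (a b c : segment V) (s t : seq (segment V)).

Definition seg_ok u a : Prop :=
  0 < seg_len a /\
  if seg_fwd a then dpath_len E (seg_len a) u (seg_end a)
  else dpath_len E (seg_len a) (seg_end a) u.

Fixpoint zigzag u s : Prop :=
  if s is a :: s' then seg_ok u a /\ zigzag (seg_end a) s' else True.

Definition zigzag_end u s := last u (map (@seg_end V) s).

Definition fwd_len s := \sum_(a <- s | seg_fwd a) seg_len a.
Definition bwd_len s := \sum_(a <- s | ~~ seg_fwd a) seg_len a.

Definition zigzag_cycle s :=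
  exists u, [/\ zigzag u s, zigzag_end u s = u & fwd_len s = bwd_len s + d].

Lemma zigzag_cat u s t :
  zigzag u (s ++ t) <-> zigzag u s /\ zigzag (zigzag_end u s) t.
Proof. by elim: s u => [|a s IH] u /=; rewrite ?IH; tauto. Qed.

Lemma zigzag_end_cat u s t : zigzag_end u (s ++ t) = zigzag_end (zigzag_end u s) t.
Proof. by rewrite /zigzag_end map_cat last_cat. Qed.

Lemma zigzag_cycle_rot s t : zigzag_cycle (s ++ t) -> zigzag_cycle (t ++ s).
Proof.
case=> u [/zigzag_cat[zs zt]]; rewrite zigzag_end_cat => eu.
rewrite /fwd_len /bwd_len !big_cat /= => net.
exists (zigzag_end u s); split; first by apply/zigzag_cat; rewrite eu.
  by rewrite zigzag_end_cat eu.
by rewrite /fwd_len /bwd_len !big_cat /=; lia.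
Qed.

Lemma zigzag_cycle_contract s a t :
  (forall u, zigzag u s -> seg_ok u a /\ zigzag_end u s = seg_end a) ->
  fwd_len s + bwd_len [:: a] = bwd_len s + fwd_len [:: a] ->
  zigzag_cycle (s ++ t) -> zigzag_cycle (a :: t).
Proof.
move=> contract_s net_s [u [/zigzag_cat[/contract_s[ua eu] zt]]].
rewrite zigzag_end_cat eu in zt * => end_t net.
exists u; split=> //; move: net net_s.
by rewrite -(cat1s a t) /fwd_len /bwd_len !big_cat /=; lia.
Qed.

Definition seg_join a b := Segment (seg_fwd a) (seg_len a + seg_len b) (seg_end b).

Lemma zigzag_cycle_join a b t : seg_fwd b = seg_fwd a ->
  zigzag_cycle [:: a, b & t] -> zigzag_cycle (seg_join a b :: t).
Proof.
move=> fba; apply: (zigzag_cycle_contract (s := [:: a; b])); last first.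
  by rewrite /fwd_len /bwd_len !big_cons !big_nil /= fba; case: (seg_fwd a) => /=; lia.
move=> u [[a_gt0 ua] [[_ ab] _]]; split=> //; split=> /=; first by lia.
move: ua ab; rewrite fba; case: (seg_fwd a) => ua ab; first exact: dpath_len_cat ua ab.
by rewrite addnC; apply: dpath_len_cat ab ua.
Qed.

Definition seg_fold a b c :=
  Segment (seg_fwd a) (seg_len a - seg_len b + seg_len c) (seg_end c).

Hypothesis rectE : totally_rectangular E.

Lemma zigzag_cycle_fold a b c t :
  seg_fwd b = ~~ seg_fwd a -> seg_fwd c = seg_fwd a ->
  seg_len b <= seg_len a -> seg_len b <= seg_len c ->
  zigzag_cycle [:: a, b, c & t] -> zigzag_cycle (seg_fold a b c :: t).
Proof.
move=> fba fca len_ba len_bc.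
apply: (zigzag_cycle_contract (s := [:: a; b; c])); last first.
  rewrite /fwd_len /bwd_len !big_cons !big_nil /= fba fca.
  by case: (seg_fwd a) => /=; lia.
move=> u [[_ ua] [[b_gt0 ab] [[_ bc] _]]]; split=> //; split=> /=; first by lia.
have rectb := rectE b_gt0.
move: ua ab bc; rewrite fba fca; case: (seg_fwd a) => /= ua ab bc.
  exact: dpath_len_rect rectb len_ba len_bc ua ab bc.
rewrite (_ : seg_len a - _ + _ = seg_len c - seg_len b + seg_len a); last by lia.
exact: dpath_len_rect rectb len_bc len_ba bc ab ua.
Qed.

Lemma zigzag_cycle_shorten s : 2 < size s -> zigzag_cycle s ->
  exists2 s', size s' < size s & zigzag_cycle s'.
Proof.
case: s => [|x s0] size_s zs; first by [].
have [s1 [b [s2 [es min_b]]]] := split_at_min (@seg_len V) x s0.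
have [[|c t] [a ers]] : exists r a, s2 ++ s1 = rcons r a.
- have : 0 < size (s2 ++ s1) by move: size_s; rewrite es !size_cat /=; lia.
  by case/lastP: (s2 ++ s1) => [//|r a _]; exists r, a.
- by move: size_s (congr1 size ers); rewrite es !size_cat /=; lia.
have size_t : size (x :: s0) = (size t).+3.
  by move: (congr1 size ers); rewrite es !size_cat size_rcons /=; lia.
have zs' : zigzag_cycle [:: a, b, c & t].
  apply: (zigzag_cycle_rot (s := [:: b, c & t]) (t := [:: a])).
  rewrite cats1 rcons_cons -ers -cat_cons; apply: zigzag_cycle_rot; rewrite -es.
  exact: zs.
have /andP[len_ba len_bc] : (seg_len b <= seg_len a) && (seg_len b <= seg_len c).
  move: min_b; rewrite es !all_cat /= => /and3P[min1 _ min2].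
  have : all (fun z => seg_len b <= seg_len z) (s2 ++ s1) by rewrite all_cat min2.
  by rewrite ers all_rcons /= => /and3P[-> ->].
case: (eqVneq (seg_fwd b) (seg_fwd a)) => [fba | nfba].
  by exists (seg_join a b :: c :: t); [rewrite size_t | exact: zigzag_cycle_join].
case: (eqVneq (seg_fwd c) (seg_fwd b)) => [fcb | nfcb].
  exists (seg_join b c :: t ++ [:: a]); first by rewrite size_t /= size_cat addn1.
  exact: zigzag_cycle_join fcb (zigzag_cycle_rot (s := [:: a]) zs').
exists (seg_fold a b c :: t); first by rewrite size_t.
apply: zigzag_cycle_fold zs' => //.
  by case: (seg_fwd a) (seg_fwd b) nfba => [] [].
by case: (seg_fwd a) (seg_fwd b) (seg_fwd c) nfba nfcb => [] [] [].
Qed.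

Hypothesis d_gt0 : 0 < d.

Lemma dpaths_differing_by_of_zigzag_cycle s :
  zigzag_cycle s -> has_dpaths_differing_by E d.
Proof.
have [n] := ubnP (size s); elim: n s => // n IH s size_s zs.
case: s size_s zs => [|a [|b [|c t]]] size_s zs.
- by case: zs => u [_ _]; rewrite /fwd_len /bwd_len !big_nil; lia.
- case: zs => u [[[_ ua] _]]; rewrite /zigzag_end /fwd_len /bwd_len !big_cons !big_nil /=.
  move=> eu; rewrite eu in ua; case: (seg_fwd a) ua => /= ua net; last by lia.
  by exists u, u, 0; rewrite addn0 (_ : d = seg_len a) ?dpath_len0 //; lia.
- case: (eqVneq (seg_fwd b) (seg_fwd a)) => [fba | nfba].
    by apply: (IH [:: seg_join a b]) => //; exact: zigzag_cycle_join.
  case: zs => u [[[_ ua] [[_ ub] _]]]; rewrite /zigzag_end /fwd_len /bwd_len.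
  rewrite !big_cons !big_nil /= => eu; move: ua ub; rewrite eu.
  case: (seg_fwd a) (seg_fwd b) nfba => [] [] //= ua ub net.
    by exists u, (seg_end a), (seg_len b); rewrite (_ : d + _ = seg_len a) //; lia.
  by exists (seg_end a), u, (seg_len a); rewrite (_ : d + _ = seg_len b) //; lia.
- have [s' s's zs'] := zigzag_cycle_shorten (isT : 2 < size [:: a, b, c & t]) zs.
  by apply: IH zs'; lia.
Qed.

End Zigzags.

Section NetLengthCycles.
Variables (V : finType) (E : rel V).

Definition seg_of_step (st : V * bool) := Segment st.2 1 st.1.

Lemma zigzag_of_opath x s : opath E x s -> zigzag E x (map seg_of_step s).
Proof.
elim: s x => [|[y o] s IH] x //= /andP[xy ys]; split; last exact: IH.
by split=> //; case: o xy => /= /dpath_len1.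
Qed.

Lemma zigzag_cycle_of_net_length d :
  has_cycle_net_length E d -> exists s, zigzag_cycle E d s.
Proof.
move=> [x [s [[_ [xs ex]] net]]]; exists (map seg_of_step s), x; split.
- exact: zigzag_of_opath.
- by rewrite /zigzag_end -map_comp.
- by rewrite /fwd_len /bwd_len !big_map !sum1_count.
Qed.

End NetLengthCycles.

Theorem mainTheorem10 (V : finType) (E : rel V) (d : nat) :
  0 < d ->
  totally_rectangular E ->
  has_cycle_net_length E d ->
  has_directed_cycle_len E d.
Proof.
move=> d_gt0 rectE /zigzag_cycle_of_net_length[s zs].
have := dpaths_differing_by_of_zigzag_cycle rectE d_gt0 zs.
exact: directed_cycle_of_dpaths_differing_by.
Qed.
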